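(* Let $X$ be a continuous random variable with probability density function $f$ whose support is the interval $(L,R)$, $-\infty\le L<R\le\infty$, and suppose $f$ is decreasing on $(L,R)$. Then for every $p\in\mathcal{D}=\{p\ge1:E[|X|^{p-1}]<\infty\}$, with $\nu_p$ the $p$-mean of $X$ and $H_p=\int_0^{\nu_p-L} y^{p-1} f(\nu_p-y)\,dy$, the density $\frac{1}{H_p}y^{p-1}f(\nu_p+y)\mathbf{1}_{(0,R-\nu_p)}(y)$ exhibits strict stochastic dominance over the density $\frac{1}{H_p}y^{p-1}f(\nu_p-y)\mathbf{1}_{(0,\nu_p-L)}(y)$.
   Context: For $p\ge 1$ and a continuous random variable $X$ with $E[|X|^{p-1}]<\infty$, the $p$-mean $\nu_p$ is the unique real solution $\nu$ of $E[(X-\nu)_+^{p-1}]=E[(\nu-X)_+^{p-1}]$; equivalently $\int_0^{\nu_p-L} y^{p-1} f(\nu_p-y)\,dy=\int_0^{R-\nu_p} y^{p-1} f(\nu_p+y)\,dy$. A distribution with CDF $F_Y$ exhibits strict stochastic dominance over one with CDF $F_Z$ if $F_Z(x)\ge F_Y(x)$ for all $x$ and $F_Z\not\equiv F_Y$. *)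

From HB Require Import structures.
From mathcomp Require Import all_boot all_order all_algebra.
From mathcomp Require Import all_classical all_reals all_analysis.
Set Implicit Arguments. Unset Strict Implicit. Unset Printing Implicit Defensive.
Import Order.TTheory GRing.Theory Num.Theory.
Local Open Scope classical_set_scope.
Local Open Scope ring_scope.

Section defs.
Variable R : realType.
Local Notation mu := (@lebesgue_measure R).

Definition is_density_with_support (f : R -> R) (L R' : \bar R) : Prop :=
  measurable_fun setT f /\
  (forall x, 0 <= f x) /\
  (\int[mu]_x (f x)%:E = 1)%E /\
  (L < R')%E /\
  (forall x : R, (L < x%:E < R')%E -> 0 < f x) /\
  (forall x : R, ~ (L < x%:E < R')%E -> f x = 0).

Definition decreasing_on (f : R -> R) (L R' : \bar R) : Prop :=
  forall x y : R, (L < x%:E)%E -> x < y -> (y%:E < R')%E -> f y < f x.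

Definition in_D (f : R -> R) (p : R) : Prop :=
  1 <= p /\ mu.-integrable setT (fun x => (powR `|x| (p - 1) * f x)%:E).

Definition left_dom (nu : R) (L : \bar R) : set R :=
  [set y | 0 < y /\ (y%:E < nu%:E - L)%E].
Definition right_dom (nu : R) (R' : \bar R) : set R :=
  [set y | 0 < y /\ (y%:E < R' - nu%:E)%E].

(* nu is the p-mean of X (equivalent integral form given in the paper):
   int_0^{nu-L} y^(p-1) f(nu-y) dy = int_0^{R-nu} y^(p-1) f(nu+y) dy *)
Definition is_pmean (f : R -> R) (L R' : \bar R) (p nu : R) : Prop :=
  (\int[mu]_(y in left_dom nu L) (powR y (p - 1) * f (nu - y))%:E =
   \int[mu]_(y in right_dom nu R') (powR y (p - 1) * f (nu + y))%:E)%E.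

Definition Hp (f : R -> R) (L : \bar R) (p nu : R) : R :=
  fine (\int[mu]_(y in left_dom nu L) (powR y (p - 1) * f (nu - y))%:E)%E.

Definition dens_right (f : R -> R) (L R' : \bar R) (p nu : R) (y : R) : R :=
  (Hp f L p nu)^-1 * powR y (p - 1) * f (nu + y) * \1_(right_dom nu R') y.
Definition dens_left (f : R -> R) (L : \bar R) (p nu : R) (y : R) : R :=
  (Hp f L p nu)^-1 * powR y (p - 1) * f (nu - y) * \1_(left_dom nu L) y.

Definition cdf_of (g : R -> R) (x : R) : \bar R :=
  (\int[mu]_(y in `]-oo, x]) (g y)%:E)%E.

Definition strict_stoch_dom (FY FZ : R -> \bar R) : Prop :=
  (forall x, (FY x <= FZ x)%E) /\ ~ (forall x, FZ x = FY x).
End defs.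

From HB Require Import structures.
From mathcomp Require Import all_boot all_order all_algebra.
From mathcomp Require Import all_classical all_reals all_analysis.
From mathcomp Require Import measurable_realfun lra.
Import Order.TTheory GRing.Theory Num.Theory.
Local Open Scope classical_set_scope.
Local Open Scope ring_scope.

(* With g_l y = y^(p-1) f (nu - y) on (0, nu - L) and g_r y = y^(p-1) f (nu + y)
   on (0, R' - nu), the p-mean equation says that g_l and g_r have the same mass
   H_p, which is positive because L < nu and finite by the moment assumption, so
   both normalized functions are probability densities.  As f decreases,
   g_r <= g_l on (0, nu - L), beyond which the left density vanishes: the CDF of
   the right density therefore never exceeds that of the left one.  On
   [nu - m2, nu - m1], for any L < m1 < m2 < min (nu, R'), the strict decrease of
   f gives a uniform positive gap between the two densities, so the two CDFs
   differ at nu - m1. *)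

Section extended_real_bounds.
Context {R : realType}.

Lemma lte_EFin_subl (e : \bar R) (c y : R) :
  (y%:E < c%:E - e)%E = (e < (c - y)%:E)%E.
Proof.
case: e => [r| |] /=; last by rewrite ltry ltNyr.
- by rewrite -EFinB !lte_fin; apply/idP/idP => ?; lra.
- by rewrite ltNge leNye /= ltNge leey.
Qed.

Lemma lte_EFin_subr (e : \bar R) (c y : R) :
  (y%:E < e - c%:E)%E = ((c + y)%:E < e)%E.
Proof.
case: e => [r| |] /=; last by rewrite ltNge leNye /= ltNge leNye.
- by rewrite -EFinB !lte_fin; apply/idP/idP => ?; lra.
- by rewrite !ltry.
Qed.

Lemma measurable_lt_EFin (e : \bar R) : measurable [set y : R | (y%:E < e)%E].
Proof.
case: e => [r| |].
- rewrite (_ : [set y | _] = `]-oo, r[%classic); first exact: measurable_itv.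
  by apply/seteqP; split => y /=; rewrite in_itv /= lte_fin.
- by rewrite (_ : [set y | _] = setT) //; apply/seteqP; split => y // _; rewrite /= ltry.
- rewrite (_ : [set y | _] = set0) //.
  by apply/seteqP; split => y //=; rewrite ltNge leNye.
Qed.

Lemma measurable_gt_EFin (e : \bar R) : measurable [set y : R | (e < y%:E)%E].
Proof.
case: e => [r| |].
- rewrite (_ : [set y | _] = `]r, +oo[%classic); first exact: measurable_itv.
  by apply/seteqP; split => y /=; rewrite in_itv /= lte_fin andbT.
- rewrite (_ : [set y | _] = set0) //.
  by apply/seteqP; split => y //=; rewrite ltNge leey.
- by rewrite (_ : [set y | _] = setT) //; apply/seteqP; split => y // _; rewrite /= ltNyr.
Qed.

Lemma measurable_left_dom (c : R) (L : \bar R) : measurable (left_dom c L).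
Proof.
rewrite (_ : left_dom c L = `]0, +oo[ `&` [set y | (y%:E < c%:E - L)%E]).
  exact: measurableI (measurable_itv _) (measurable_lt_EFin _).
by apply/seteqP; split => y /=; rewrite in_itv /= andbT.
Qed.

Lemma measurable_right_dom (c : R) (R' : \bar R) : measurable (right_dom c R').
Proof.
rewrite (_ : right_dom c R' = `]0, +oo[ `&` [set y | (y%:E < R' - c%:E)%E]).
  exact: measurableI (measurable_itv _) (measurable_lt_EFin _).
by apply/seteqP; split => y /=; rewrite in_itv /= andbT.
Qed.

Lemma lte_exists_real_itv (e1 e2 : \bar R) : (e1 < e2)%E ->
  exists m1 m2 : R, [/\ (e1 < m1%:E)%E, m1 < m2 & (m2%:E < e2)%E].
Proof.
case: e1 => [r1| |]; case: e2 => [r2| |] //=.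
- rewrite lte_fin => r12; exists ((2 * r1 + r2) / 3), ((r1 + 2 * r2) / 3).
  by split; rewrite ?lte_fin; lra.
- by exists (r1 + 1), (r1 + 2); split; rewrite ?lte_fin ?ltry //; lra.
- by exists (r2 - 2), (r2 - 1); split; rewrite ?lte_fin ?ltNyr //; lra.
- by exists 0, 1; split; rewrite ?ltry ?ltNyr.
Qed.

End extended_real_bounds.

Section lebesgue_integral_lemmas.
Context {R : realType}.
Local Notation mu := (@lebesgue_measure R).

Lemma lebesgue_measure_reflect (c : R) (A : set R) : measurable A ->
  pushforward mu (fun y : R => c - y : measurableTypeR R) A = mu A.
Proof.
(* [mreflect] is what makes the pushforward below a measure. *)
move=> mA; have mreflect : measurable_fun setT (fun y : R => c - y : measurableTypeR R).
  exact: measurable_funB.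
apply/esym; apply: (@lebesgue_measure_unique R
  (pushforward mu (fun y : R => c - y : measurableTypeR R))) => // _ [[a b]] _ <-.
change (mu `]a, b]%classic = mu ((fun y : R => c - y) @^-1` `]a, b]%classic)).
rewrite (_ : _ @^-1` _ = `[c - b, c - a[%classic); last first.
  apply/seteqP; split => y /=; rewrite !in_itv /= => /andP[y1 y2];
    by apply/andP; split; lra.
rewrite !lebesgue_measure_itv /= !lte_fin ltrD2l ltrN2.
by case: ltP => // _; rewrite -!EFinD; congr (_%:E); lra.
Qed.

Lemma ge0_integral_reflect (c : R) (D : set R) (F : R -> \bar R) :
  measurable D -> measurable_fun setT F -> (forall x, D x -> (0 <= F x)%E) ->
  (\int[mu]_(x in D) F x =
   \int[mu]_(y in (fun y => (c - y)%R) @^-1` D) F (c - y)%R)%E.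
Proof.
move=> mD mF F0.
pose reflect := fun y : measurableTypeR R => (c - y)%R : measurableTypeR R.
have mreflect : measurable_fun setT reflect by exact: measurable_funB.
transitivity (\int[pushforward mu reflect]_(x in D) F x)%E.
  by apply: eq_measure_integral => //= A mA _; rewrite lebesgue_measure_reflect.
rewrite (ge0_integral_pushforward mreflect) //.
- exact: measurable_funS mF.
- by move=> x /set_mem; exact: F0.
Qed.

Lemma ler_mulr_indic (A : set R) (x t : R) : 0 <= x -> x * \1_A t <= x.
Proof. by move=> x0; rewrite indicE; case: (t \in A); rewrite ?mulr1 ?mulr0. Qed.

Lemma integral_mul_indic (A : set R) (g : R -> R) :
  (\int[mu]_x (g x * \1_A x)%:E = \int[mu]_(x in A) (g x)%:E)%E.
Proof.
rewrite [RHS]integral_mkcond; apply: eq_integral => x _.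
by rewrite patchE indicE; case: (x \in A); rewrite ?mulr1 ?mulr0.
Qed.

Lemma integral_supported (D : set R) (G : R -> \bar R) :
  (forall x, ~ D x -> G x = 0%E) -> (\int[mu]_(x in D) G x = \int[mu]_x G x)%E.
Proof.
move=> G0; rewrite integral_mkcond; apply: eq_integral => x _.
by rewrite patchE; case: ifPn => // /negP xD; rewrite G0 // => Dx; apply/xD/mem_set.
Qed.

Lemma ge0_integral_itv_gap (D : set R) (g h : R -> R) (a b d : R) :
  measurable D -> measurable_fun D g -> measurable_fun D h ->
  (forall x, D x -> 0 <= g x) -> `[a, b] `<=` D -> a < b -> 0 <= d ->
  (forall x, D x -> g x + d * \1_`[a, b] x <= h x) ->
  (\int[mu]_(x in D) (g x)%:E + (d * (b - a))%:E <= \int[mu]_(x in D) (h x)%:E)%E.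
Proof.
move=> mD mg mh g0 abD ab d0 gh.
have mindic : measurable_fun D (fun x => (d * \1_`[a, b] x)%:E).
  by apply/measurable_EFinP/measurable_funM => //; exact/measurable_indic.
have -> : (d * (b - a))%:E = (\int[mu]_(x in D) (d * \1_`[a, b] x)%:E)%E.
  under eq_integral do rewrite EFinM.
  rewrite ge0_integralZl_EFin //; last exact/measurable_EFinP/measurable_indic.
  have mu_ab : mu `[a, b] = (b - a)%:E.
    by rewrite lebesgue_measure_itv /= lte_fin ab -EFinD.
  rewrite integral_indic // setIidl // [X in (_ * X)%E](_ : _ = (b - a)%:E).
    by rewrite -EFinM.
  exact: mu_ab.
rewrite -ge0_integralD //; last 2 first.
- exact/measurable_EFinP.
- by move=> x _; rewrite lee_fin mulr_ge0.
apply: ge0_le_integral => //.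
- by move=> x Dx; rewrite -EFinD lee_fin addr_ge0 ?g0 ?mulr_ge0.
- by apply: emeasurable_funD => //; exact/measurable_EFinP.
- exact/measurable_EFinP.
Qed.

End lebesgue_integral_lemmas.

Section cdf_comparison.
Context {R : realType}.
Local Notation mu := (@lebesgue_measure R).

Lemma integral_gt0_itv (D : set R) (g : R -> R) (a b d : R) :
  measurable D -> measurable_fun D g -> (forall x, D x -> 0 <= g x) ->
  `[a, b] `<=` D -> a < b -> 0 < d -> (forall x, a <= x <= b -> d <= g x) ->
  (0 < \int[mu]_(x in D) (g x)%:E)%E.
Proof.
move=> mD mg g0 abD ab d0 dg.
apply: (@lt_le_trans _ _ (d * (b - a))%:E).
  by rewrite lte_fin mulr_gt0 // subr_gt0.
have := @ge0_integral_itv_gap _ D (fun=> 0) g a b d mD (measurable_cst _) mg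
  (fun _ _ => lexx 0) abD ab (ltW d0).
rewrite integral0_eq // add0e; apply => x Dx.
rewrite add0r indicE; case: (boolP (x \in _)) => [/set_mem|_].
  by rewrite /= in_itv /= mulr1 => /dg.
by rewrite mulr0 g0.
Qed.

Lemma cdf_le_of_density_le (g h : R -> R) (t : \bar R) :
  measurable_fun setT g -> measurable_fun setT h ->
  (forall y, 0 <= g y) -> (forall y, 0 <= h y) ->
  (forall y, (y%:E < t)%E -> g y <= h y) ->
  (forall y, (t <= y%:E)%E -> h y = 0) ->
  (\int[mu]_y (g y)%:E <= \int[mu]_y (h y)%:E)%E ->
  forall x, (cdf_of g x <= cdf_of h x)%E.
Proof.
move=> mg mh g0 h0 gh h_eq0 gh_total x; rewrite /cdf_of.
have mgE : measurable_fun setT (EFin \o g) by exact/measurable_EFinP.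
have mhE : measurable_fun setT (EFin \o h) by exact/measurable_EFinP.
have [xt|tx] := ltP x%:E t.
  apply: ge0_le_integral => //; first by move=> y _; rewrite lee_fin.
  - exact: measurable_funS mgE.
  - exact: measurable_funS mhE.
  move=> y /=; rewrite in_itv /= => yx; rewrite lee_fin gh //.
  by apply: le_lt_trans xt; rewrite lee_fin.
rewrite [leRHS](@integral_supported _ `]-oo, x]%classic); last first.
  move=> y /=; rewrite in_itv /= => /negP; rewrite -ltNge => xy.
  by rewrite h_eq0 // (le_trans tx) // lee_fin ltW.
apply: le_trans gh_total.
apply: (@ge0_subset_integral _ _ _ mu _ _ (measurable_itv _) measurableT) => //.
by move=> y _; rewrite lee_fin.
Qed.

Lemma cdf_lt_of_density_gap (g h : R -> R) (a b d : R) :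
  measurable_fun setT g -> measurable_fun setT h -> (forall y, 0 <= g y) ->
  (\int[mu]_y (g y)%:E)%E \is a fin_num -> a < b -> 0 < d ->
  (forall y, y <= b -> g y + d * \1_`[a, b] y <= h y) ->
  (cdf_of g b < cdf_of h b)%E.
Proof.
move=> mg mh g0 g_fin ab d0 gap.
have mI : measurable `]-oo, b]%classic := measurable_itv _.
have cdf_fin : cdf_of g b \is a fin_num.
  rewrite ge0_fin_numE; last by apply: integral_ge0 => y _; rewrite lee_fin.
  apply: (@le_lt_trans _ _ (\int[mu]_y (g y)%:E)%E); last first.
    by move/fin_numPlt: g_fin => /andP[].
  apply: (@ge0_subset_integral _ _ _ mu _ _ mI measurableT) => //.
    exact/measurable_EFinP.
  by move=> y _; rewrite lee_fin.
have := @ge0_integral_itv_gap _ `]-oo, b] g h a b d mI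
  (measurable_funS measurableT (@subsetT _ _) mg)
  (measurable_funS measurableT (@subsetT _ _) mh) (fun y _ => g0 y).
move=> /(_ _ ab (ltW d0)) le_gap.
apply: lt_le_trans (le_gap _ _); last first.
- by move=> y /=; rewrite in_itv /= => /gap.
- by move=> y /=; rewrite !in_itv /= => /andP[].
rewrite -/(cdf_of g b) -(fineK cdf_fin) -EFinD lte_fin ltrDl.
by rewrite mulr_gt0 // subr_gt0.
Qed.

End cdf_comparison.

Lemma powR_sub_le {R : realType} (p c x : R) : 1 <= p -> x < c ->
  powR (c - x) (p - 1) <=
    powR (2 * `|c|) (p - 1) + powR 2 (p - 1) * powR `|x| (p - 1).
Proof.
move=> p1 xc; have p10 : 0 <= p - 1 by lra.
have := ler_norm c; have := ler_norm (- x); rewrite normrN.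
have := normr_ge0 x; have := normr_ge0 c.
have := powR_ge0 (2 * `|c|) (p - 1); have := powR_ge0 2 (p - 1).
have := powR_ge0 `|x| (p - 1).
move=> P3 P2 P1 c0 x0 xN cN.
case: (lerP `|x| `|c|) => xc'.
- apply: (@le_trans _ _ (powR (2 * `|c|) (p - 1))); last by rewrite lerDl mulr_ge0.
  by apply: ge0_ler_powR => //; rewrite ?nnegrE; lra.
- apply: (@le_trans _ _ (powR 2 (p - 1) * powR `|x| (p - 1))); last by rewrite lerDr.
  by rewrite -powRM //; apply: ge0_ler_powR => //; rewrite ?nnegrE; lra.
Qed.

Section decreasing_density.
Context {R : realType}.
Local Notation mu := (@lebesgue_measure R).
Context {f : R -> R} {L R' : \bar R}.
Hypothesis LR : (L < R')%E.
Hypothesis f_gt0 : forall x : R, (L < x%:E < R')%E -> 0 < f x.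
Hypothesis f_eq0 : forall x : R, ~ (L < x%:E < R')%E -> f x = 0.
Hypothesis f_dec : decreasing_on f L R'.

Lemma density_ge0 x : 0 <= f x.
Proof.
have [/f_gt0/ltW //|/negP/f_eq0 ->] := boolP (L < x%:E < R')%E.
exact: lexx.
Qed.

Lemma density_decreasing u v :
  (L < u%:E)%E -> u < v -> (u%:E < R')%E -> f v < f u.
Proof.
move=> Lu uv uR; have [vR|vR] := boolP (v%:E < R')%E; first exact: f_dec.
by rewrite f_eq0 ?f_gt0 ?Lu ?uR // => /andP[_]; apply/negP.
Qed.

Lemma density_nonincreasing u v : (L < u%:E)%E -> u <= v -> f v <= f u.
Proof.
move=> Lu; rewrite le_eqVlt => /predU1P[<- //|uv].
have [uR|uR] := boolP (u%:E < R')%E; first exact/ltW/density_decreasing.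
rewrite [f u]f_eq0 ?f_eq0 //; last by move=> /andP[_]; apply/negP.
move=> /andP[_ vR]; move/negP: uR; apply.
by apply: le_lt_trans vR; rewrite lee_fin ltW.
Qed.

Section pmean.
Context {p nu : R}.
Hypothesis p_ge1 : 1 <= p.
Hypothesis mf : measurable_fun setT f.

Local Notation left_integral :=
  (\int[mu]_(y in left_dom nu L) (powR y (p - 1) * f (nu - y))%:E)%E.
Local Notation right_integral :=
  (\int[mu]_(y in right_dom nu R') (powR y (p - 1) * f (nu + y))%:E)%E.

Lemma measurable_left_weight :
  measurable_fun setT (fun y => powR y (p - 1) * f (nu - y)).
Proof.
apply: measurable_funM; first exact: measurable_powR.
by apply: measurableT_comp mf _; exact: measurable_funB.
Qed.

Lemma measurable_right_weight :
  measurable_fun setT (fun y => powR y (p - 1) * f (nu + y)).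
Proof.
apply: measurable_funM; first exact: measurable_powR.
by apply: measurableT_comp mf _; exact: measurable_funD.
Qed.

Lemma pmean_gt_lower : is_pmean f L R' p nu -> (L < nu%:E)%E.
Proof.
move=> pm; rewrite ltNge; apply/negP => nuL.
have left0 : left_dom nu L = set0.
  apply/seteqP; split => y //= [y0]; rewrite lte_EFin_subl => Ly.
  have : ((nu - y)%:E < nu%:E)%E by rewrite lte_fin; lra.
  by move=> /lt_le_trans/(_ nuL)/(lt_trans Ly); rewrite ltxx.
have [m1 [m2 [Lm1 m12 m2R]]] := lte_exists_real_itv _ _ LR.
have num1 : nu < m1 by rewrite -lte_fin (le_lt_trans nuL Lm1).
have : (0 < right_integral)%E.
  apply: (@integral_gt0_itv _ _ _ (m1 - nu) (m2 - nu) (powR (m1 - nu) (p - 1) * f m2)).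
  - exact: measurable_right_dom.
  - exact: measurable_funS measurable_right_weight.
  - by move=> y _; rewrite mulr_ge0 ?powR_ge0 ?density_ge0.
  - move=> y /=; rewrite in_itv /= => /andP[y1 y2]; split; first lra.
    by rewrite lte_EFin_subr (le_lt_trans _ m2R) // lee_fin; lra.
  - lra.
  - rewrite mulr_gt0 ?powR_gt0 ?f_gt0 ?m2R ?andbT //; first lra.
    by rewrite (lt_trans Lm1) ?lte_fin.
  move=> y /andP[y1 y2]; apply: ler_pM; rewrite ?powR_ge0 ?density_ge0 //.
    by apply: ge0_ler_powR; rewrite ?nnegrE ?subr_ge0 //; lra.
  apply: density_nonincreasing; last lra.
  by rewrite (lt_le_trans Lm1) // lee_fin; lra.
by rewrite -pm left0 integral_set0 ltxx.
Qed.

Lemma left_integral_gt0 : (L < nu%:E)%E -> (0 < left_integral)%E.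
Proof.
move=> nuL.
have L_min : (L < Order.min nu%:E R')%E by rewrite lt_min nuL LR.
have [m1 [m2 [Lm1 m12]]] := lte_exists_real_itv _ _ L_min.
rewrite lt_min lte_fin => /andP[m2nu m2R].
have Lm2 : (L < m2%:E)%E by rewrite (lt_trans Lm1) ?lte_fin.
apply: (@integral_gt0_itv _ _ _ (nu - m2) (nu - m1) (powR (nu - m2) (p - 1) * f m2)).
- exact: measurable_left_dom.
- exact: measurable_funS measurable_left_weight.
- by move=> y _; rewrite mulr_ge0 ?powR_ge0 ?density_ge0.
- move=> y /=; rewrite in_itv /= => /andP[y1 y2]; split; first lra.
  by rewrite lte_EFin_subl (lt_le_trans Lm1) // lee_fin; lra.
- lra.
- by rewrite mulr_gt0 ?powR_gt0 ?f_gt0 ?Lm2 ?m2R //; lra.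
move=> y /andP[y1 y2]; apply: ler_pM; rewrite ?powR_ge0 ?density_ge0 //.
  by apply: ge0_ler_powR; rewrite ?nnegrE ?subr_ge0 //; lra.
apply: density_nonincreasing; last lra.
by rewrite (lt_le_trans Lm1) // lee_fin; lra.
Qed.

Lemma left_integral_reflectE :
  left_integral = (\int[mu]_(x in [set x | (L < x%:E)%E] `&` `]-oo, nu[)
                    (powR (nu - x) (p - 1) * f x)%:E)%E.
Proof.
have mD : measurable ([set x : R | (L < x%:E)%E] `&` `]-oo, nu[).
  by apply: measurableI; [exact: measurable_gt_EFin | exact: measurable_itv].
rewrite (ge0_integral_reflect nu _ _ mD); last 2 first.
- apply/measurable_EFinP/measurable_funM => //.
  by apply: measurableT_comp (measurable_powR _) _; exact: measurable_funB.
- by move=> x _; rewrite lee_fin mulr_ge0 ?powR_ge0 ?density_ge0.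
have -> : (fun y => nu - y) @^-1` ([set x | (L < x%:E)%E] `&` `]-oo, nu[) =
          left_dom nu L.
  apply/seteqP; split => y; rewrite /left_dom /= in_itv /= lte_EFin_subl;
    by move=> [y1 y2]; split => //; lra.
by apply: eq_integral => y _; rewrite (_ : nu - (nu - y) = y) //; lra.
Qed.

Lemma left_integral_fin_num : (\int[mu]_x (f x)%:E = 1)%E ->
  mu.-integrable setT (fun x => (powR `|x| (p - 1) * f x)%:E) ->
  left_integral \is a fin_num.
Proof.
move=> f1 moment; rewrite left_integral_reflectE.
set D := [set x : R | (L < x%:E)%E] `&` `]-oo, nu[.
have mD : measurable D.
  by apply: measurableI; [exact: measurable_gt_EFin | exact: measurable_itv].
pose F x := (powR (nu - x) (p - 1) * f x)%:E.
have mF : measurable_fun D F.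
  apply: (measurable_funS measurableT (@subsetT _ D)).
  apply/measurable_EFinP/measurable_funM => //.
  by apply: measurableT_comp (measurable_powR _) _; exact: measurable_funB.
have f_int : mu.-integrable setT (EFin \o f).
  apply/integrableP; split; first exact/measurable_EFinP.
  under eq_integral do rewrite gee0_abs ?lee_fin ?density_ge0 //.
  by rewrite f1 ltry.
pose C1 := powR (2 * `|nu|) (p - 1); pose C2 := powR 2 (p - 1).
pose G x := (C1%:E * (f x)%:E + C2%:E * (powR `|x| (p - 1) * f x)%:E)%E.
have G_int : mu.-integrable setT G.
  by apply: integrableD => //; exact: integrableZl.
suff : mu.-integrable D F by exact: integrable_fin_num.
apply: (@le_integrable _ _ _ mu D mD F G mF); last first.
  exact: (@integrableS _ _ _ mu setT D _ measurableT mD (@subsetT _ D) G_int).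
move=> x [_ /=]; rewrite in_itv /= => xnu.
rewrite lee_fin ger0_norm ?mulr_ge0 ?powR_ge0 ?density_ge0 //.
apply: le_trans (ler_norm _); rewrite mulrA -mulrDl.
by apply: ler_wpM2r; [exact: density_ge0 | exact: powR_sub_le].
Qed.

Lemma Hp_gt0 : (L < nu%:E)%E -> (\int[mu]_x (f x)%:E = 1)%E ->
  mu.-integrable setT (fun x => (powR `|x| (p - 1) * f x)%:E) ->
  0 < Hp f L p nu.
Proof.
move=> nuL f1 moment; apply: fine_gt0; rewrite left_integral_gt0 //=.
by move/fin_numPlt: (left_integral_fin_num f1 moment) => /andP[].
Qed.

Lemma Hp_ge0 : 0 <= Hp f L p nu.
Proof.
apply/fine_ge0/integral_ge0 => y _.
by rewrite lee_fin mulr_ge0 ?powR_ge0 ?density_ge0.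
Qed.

(* [fine] sends [+oo] to [0], so a positive [Hp] forces a finite integral. *)
Lemma left_integral_Hp : 0 < Hp f L p nu -> left_integral = (Hp f L p nu)%:E.
Proof. by rewrite /Hp; case: left_integral => //=; rewrite ltxx. Qed.

Lemma measurable_dens_left : measurable_fun setT (dens_left f L p nu).
Proof.
apply: measurable_funM; last exact: measurable_indic (measurable_left_dom _ _).
rewrite (_ : (fun y => _) = (fun y => (Hp f L p nu)^-1 * (powR y (p - 1) * f (nu - y)))).
  exact: measurable_funM measurable_left_weight.
by apply/funext => y; rewrite mulrA.
Qed.

Lemma measurable_dens_right : measurable_fun setT (dens_right f L R' p nu).
Proof.
apply: measurable_funM; last exact: measurable_indic (measurable_right_dom _ _).
rewrite (_ : (fun y => _) = (fun y => (Hp f L p nu)^-1 * (powR y (p - 1) * f (nu + y)))).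
  exact: measurable_funM measurable_right_weight.
by apply/funext => y; rewrite mulrA.
Qed.

Lemma dens_left_ge0 y : 0 <= dens_left f L p nu y.
Proof.
by rewrite !mulr_ge0 ?invr_ge0 ?Hp_ge0 ?powR_ge0 ?density_ge0 // indicE ler0n.
Qed.

Lemma dens_right_ge0 y : 0 <= dens_right f L R' p nu y.
Proof.
by rewrite !mulr_ge0 ?invr_ge0 ?Hp_ge0 ?powR_ge0 ?density_ge0 // indicE ler0n.
Qed.

Lemma integral_dens_left : 0 < Hp f L p nu ->
  (\int[mu]_y (dens_left f L p nu y)%:E = 1)%E.
Proof.
move=> Hp_gt0.
under eq_integral do rewrite /dens_left -!mulrA EFinM mulrA.
rewrite ge0_integralZl_EFin ?invr_ge0 ?Hp_ge0 //; last 2 first.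
- by move=> y _; rewrite lee_fin !mulr_ge0 ?powR_ge0 ?density_ge0 // indicE ler0n.
- apply/measurable_EFinP/measurable_funM; first exact: measurable_left_weight.
  exact: measurable_indic (measurable_left_dom _ _).
by rewrite integral_mul_indic left_integral_Hp // -EFinM mulVf ?gt_eqF.
Qed.

Lemma integral_dens_right : is_pmean f L R' p nu -> 0 < Hp f L p nu ->
  (\int[mu]_y (dens_right f L R' p nu y)%:E = 1)%E.
Proof.
move=> pm Hp_gt0.
under eq_integral do rewrite /dens_right -!mulrA EFinM mulrA.
rewrite ge0_integralZl_EFin ?invr_ge0 ?Hp_ge0 //; last 2 first.
- by move=> y _; rewrite lee_fin !mulr_ge0 ?powR_ge0 ?density_ge0 // indicE ler0n.
- apply/measurable_EFinP/measurable_funM; first exact: measurable_right_weight.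
  exact: measurable_indic (measurable_right_dom _ _).
by rewrite integral_mul_indic -pm left_integral_Hp // -EFinM mulVf ?gt_eqF.
Qed.

Lemma dens_left_eq0 y : (nu%:E - L <= y%:E)%E -> dens_left f L p nu y = 0.
Proof.
move=> Ly; rewrite /dens_left indicE memNset ?mulr0 // => -[_].
by apply/negP; rewrite -leNgt.
Qed.

Lemma dens_right_le_left y :
  (y%:E < nu%:E - L)%E -> dens_right f L R' p nu y <= dens_left f L p nu y.
Proof.
move=> yL; rewrite /dens_left /dens_right -!mulrA.
apply: ler_wpM2l; first by rewrite invr_ge0 Hp_ge0.
apply: ler_wpM2l; first exact: powR_ge0.
have [y0|y0] := ltP 0 y.
  have y_left : y \in left_dom nu L by apply/mem_set.
  rewrite [\1_(left_dom nu L) y]indicE y_left mulr1.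
  apply: le_trans (ler_mulr_indic _ _ _ (density_ge0 _)) _.
  by apply: density_nonincreasing; [rewrite -lte_EFin_subl | lra].
have y_right : y \notin right_dom nu R'.
  by apply/negP => /set_mem [/lt_le_trans/(_ y0)]; rewrite ltxx.
rewrite [\1_(right_dom nu R') y]indicE (negbTE y_right) mulr0.
by rewrite mulr_ge0 ?density_ge0 // indicE ler0n.
Qed.

Lemma dens_left_gap : (L < nu%:E)%E -> 0 < Hp f L p nu ->
  exists a b d, [/\ a < b, 0 < d & forall y, y <= b ->
    dens_right f L R' p nu y + d * \1_`[a, b] y <= dens_left f L p nu y].
Proof.
move=> nuL Hp_gt0.
have L_min : (L < Order.min nu%:E R')%E by rewrite lt_min nuL LR.
have [m1 [m2 [Lm1 m12]]] := lte_exists_real_itv _ _ L_min.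
rewrite lt_min lte_fin => /andP[m2nu m2R].
have Lm2 : (L < m2%:E)%E by rewrite (lt_trans Lm1) ?lte_fin.
(* For y in [nu - m2, nu - m1]: f (nu + y) <= f (2 nu - m2) < f m2 <= f (nu - y). *)
have f_gap : f (nu + (nu - m2)) < f m2 by apply: density_decreasing => //; lra.
exists (nu - m2), (nu - m1),
  ((Hp f L p nu)^-1 * (powR (nu - m2) (p - 1) * (f m2 - f (nu + (nu - m2))))).
split; first lra.
  by rewrite !mulr_gt0 ?invr_gt0 ?powR_gt0 ?subr_gt0 //; lra.
move=> y yb; rewrite indicE; have [/set_mem /= |_] := boolP (y \in _); last first.
  rewrite mulr0 addr0; apply: dens_right_le_left.
  by rewrite lte_EFin_subl (lt_le_trans Lm1) // lee_fin; lra.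
rewrite in_itv /= mulr1 => /andP[ay _].
have y_left : y \in left_dom nu L.
  apply/mem_set; split; first lra.
  by rewrite lte_EFin_subl (lt_le_trans Lm1) // lee_fin; lra.
rewrite /dens_left /dens_right [\1_(left_dom nu L) y]indicE y_left mulr1.
rewrite -!mulrA -mulrDr; apply: ler_wpM2l; first by rewrite invr_ge0 Hp_ge0.
have powR_le : powR (nu - m2) (p - 1) <= powR y (p - 1).
  by apply: ge0_ler_powR; rewrite ?nnegrE ?subr_ge0 //; lra.
have f_right : f (nu + y) * \1_(right_dom nu R') y <= f (nu + (nu - m2)).
  apply: le_trans (ler_mulr_indic _ _ _ (density_ge0 _)) _.
  apply: density_nonincreasing; last lra.
  by rewrite (lt_trans nuL) // lte_fin; lra.
have f_left : f m2 <= f (nu - y).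
  apply: density_nonincreasing; last lra.
  by rewrite (lt_le_trans Lm1) // lee_fin; lra.
have gap_le : powR (nu - m2) (p - 1) * (f m2 - f (nu + (nu - m2))) <=
    powR y (p - 1) * (f (nu - y) - f (nu + y) * \1_(right_dom nu R') y).
  by apply: ler_pM; rewrite ?powR_ge0 //; lra.
by rewrite mulrBr in gap_le; lra.
Qed.

End pmean.
End decreasing_density.

Theorem proposition2 (R : realType) (f : R -> R) (L R' : \bar R) :
  is_density_with_support f L R' ->
  decreasing_on f L R' ->
  forall p : R, in_D f p ->
  forall nu : R, is_pmean f L R' p nu ->
  strict_stoch_dom (cdf_of (dens_right f L R' p nu))
                   (cdf_of (dens_left f L p nu)).
Proof.
move=> [mf [_ [f1 [LR [f_gt0 f_eq0]]]]] f_dec p [p_ge1 moment] nu pm.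
have nuL := pmean_gt_lower LR f_gt0 f_eq0 f_dec p_ge1 mf pm.
have Hp_gt0 := Hp_gt0 LR f_gt0 f_eq0 f_dec p_ge1 mf nuL f1 moment.
have total_right := integral_dens_right f_gt0 f_eq0 mf pm Hp_gt0.
have total_left := integral_dens_left f_gt0 f_eq0 mf Hp_gt0.
have right_ge0 y := dens_right_ge0 f_gt0 f_eq0 (p := p) (nu := nu) y.
split.
  apply: (cdf_le_of_density_le _ _ (nu%:E - L)).
  - exact: measurable_dens_right mf.
  - exact: measurable_dens_left mf.
  - exact: right_ge0.
  - exact: (dens_left_ge0 f_gt0 f_eq0).
  - exact: (dens_right_le_left f_gt0 f_eq0 f_dec).
  - exact: dens_left_eq0.
  - by rewrite total_right total_left.
move=> cdf_eq.
have [a [b [d [ab d_gt0 gap]]]] := dens_left_gap LR f_gt0 f_eq0 f_dec p_ge1 nuL Hp_gt0.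
have right_fin :
    (\int[lebesgue_measure]_y (dens_right f L R' p nu y)%:E)%E \is a fin_num.
  by rewrite total_right.
have := cdf_lt_of_density_gap _ _ _ _ _ (measurable_dens_right mf)
  (measurable_dens_left mf) right_ge0 right_fin ab d_gt0 gap.
by rewrite cdf_eq ltxx.
Qed.
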